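(* Let $n \geq 2$ and $r$ be positive integers. Let $u$ and $z$ be complex numbers with $w = z/u = e^{i\varphi}$ where $0 < \varphi < \pi$, and let $\sqrt{w} = e^{i\varphi/2}$. Then \[ \left|X_{n,r}^{*}(z,u)\right| \leq 4|u|^{r}\frac{\Gamma(1-1/n)\, r!}{\Gamma(r+1-1/n)}\left|1+\sqrt{w}\right|^{2r-2} \] and \[ \left|X_{n,r}^{*}(u,z)\right| \leq 4|z|^{r}\frac{\Gamma(1-1/n)\, r!}{\Gamma(r+1-1/n)}\left|1+\sqrt{w}\right|^{2r-2}. \]
   Context: $X_{n,r}(X) = {}_{2}F_{1}(-r,-r-1/n;1-1/n;X) = \sum_{s=0}^{r}\frac{(-r)_{s}(-r-1/n)_{s}}{(1-1/n)_{s}\,s!}X^{s}$ with $(y)_{s} = y(y+1)\cdots(y+s-1)$, and $X_{n,r}^{*}(X,Y) = Y^{r}X_{n,r}(X/Y)$. *)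

From Stdlib Require Import Reals Factorial.
From Coquelicot Require Import Coquelicot.
Open Scope C_scope.

Fixpoint poch (y : C) (s : nat) : C :=
  match s with
  | O => 1
  | S s' => poch y s' * (y + RtoC (INR s'))
  end.

(* X_{n,r}(X) = 2F1(-r, -r-1/n; 1-1/n; X)
   = sum_{s=0}^r (-r)_s (-r-1/n)_s / ((1-1/n)_s s!) X^s *)
Definition Xnr (n r : nat) (X : C) : C :=
  sum_n (fun s =>
    poch (- RtoC (INR r)) s * poch (- RtoC (INR r) - RtoC (1 / INR n)) s
    / (poch (1 - RtoC (1 / INR n)) s * RtoC (INR (fact s))) * X ^ s) r.

Definition Xstar (n r : nat) (X Y : C) : C := Y ^ r * Xnr n r (X / Y).

Definition expi (phi : R) : C := (cos phi, sin phi).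

(* Gamma(1-1/n) r! / Gamma(r+1-1/n) = r! / (1-1/n)_r, using the functional
   equation Gamma(a+r) = (a)_r Gamma(a) with a = 1-1/n > 0. *)
Fixpoint rpoch (y : R) (s : nat) : R :=
  match s with
  | O => 1%R
  | S s' => (rpoch y s' * (y + INR s'))%R
  end.

Definition gamma_ratio (n r : nat) : R :=
  (INR (fact r) / rpoch (1 - 1 / INR n) r)%R.

From Stdlib Require Import Reals Lra Lia.
From Coquelicot Require Import Coquelicot.
From mathcomp Require all_boot all_order all_algebra ring lra.
From mathcomp.real_closed Require complex.
From mathcomp.reals_stdlib Require Rstruct.

(* With [a = 1/n], the coefficients of [X_{n,r}] are
   [Gamma(1-a) r! / Gamma(r+1-a) * binom(r+a, s) * binom(r-a, r-s)], so up to
   that Gamma ratio, [X_{n,r}(w)] is the coefficient of [t^r] in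
   [(1 + w t)^(r+a) (1 + t)^(r-a)] = [((1 + w t)(1 + t))^(r-1) * H(t)] with
   [H(t) = (1 + w t)^(1+a) (1 + t)^(1-a)].  For [|w| = 1] the coefficients of the
   polynomial factor have absolute sum at most [(2 + |1 + w|)^(r-1)], and every
   coefficient of [H] has modulus at most [sum_j |binom(1+a, j)| <= 4], because
   [|binom(1-a, m)| <= 1] and the partial sums of [|binom(a, j)|] telescope to
   [2 - |binom(a-1, j)|].  Finally [2 + |1 + w| = |1 + sqrt w|^2] for
   [w = e^{i phi}], [|phi| <= pi], and [|1 + 1/w| = |1 + w|] gives the bound for
   [X*(u, z)]. *)

Module HypergeometricBound.
Import mathcomp.boot.all_boot mathcomp.order.all_order mathcomp.algebra.all_algebra.
Import mathcomp.algebra_tactics.ring mathcomp.algebra_tactics.lra.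
Import mathcomp.real_closed.complex mathcomp.reals_stdlib.Rstruct.
Import Order.TTheory GRing.Theory Num.Theory.
Set Implicit Arguments.
Unset Strict Implicit.
Unset Printing Implicit Defensive.
Local Open Scope ring_scope.

Section GeneralizedBinomial.
Variable K : numFieldType.
Implicit Types (x y c : K) (p q : {poly K}).

Fixpoint gbinom x k : K :=
  if k is k'.+1 then gbinom x k' * (x - k'%:R) / k'.+1%:R else 1.

Lemma gbinom0 x : gbinom x 0 = 1. Proof. by []. Qed.
Lemma gbinomS x k : gbinom x k.+1 = gbinom x k * (x - k%:R) / k.+1%:R.
Proof. by []. Qed.
Arguments gbinom : simpl never.

Lemma mul_gbinomS x k : k.+1%:R * gbinom x k.+1 = (x - k%:R) * gbinom x k.
Proof. by rewrite gbinomS mulrC divfK ?pnatr_eq0 // mulrC. Qed.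

Lemma gbinom_nat n k : gbinom n%:R k = 'C(n, k)%:R.
Proof.
elim: k => [|k IH]; first by rewrite gbinom0 bin0.
apply: (@mulfI _ k.+1%:R); first by rewrite pnatr_eq0.
rewrite mul_gbinomS IH -natrM mul_bin_left natrM.
case: (leqP k n) => hk; first by rewrite natrB.
by rewrite bin_small // !mulr0.
Qed.

Lemma gbinomD x y n :
  gbinom (x + y) n = \sum_(i < n.+1) gbinom x i * gbinom y (n - i).
Proof.
elim: n => [|n IH]; first by rewrite big_ord1 !gbinom0 mulr1.
apply: (@mulfI _ n.+1%:R); first by rewrite pnatr_eq0.
rewrite mul_gbinomS IH big_distrr big_distrr /=.
transitivity (\sum_(i < n.+2) (i%:R * (gbinom x i * gbinom y (n.+1 - i))
      + (n.+1 - i)%:R * (gbinom x i * gbinom y (n.+1 - i)))); last first.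
  apply: eq_bigr => i _; rewrite -mulrDl -natrD subnKC //; exact: ltnSE (ltn_ord i).
rewrite big_split /= [X in _ = X + _]big_ord_recl [X in _ = _ + X]big_ord_recr /=.
rewrite mul0r add0r subnn mul0r addr0 -big_split /=; apply: eq_bigr => i _.
have hi : (i <= n)%N by exact: ltnSE (ltn_ord i).
rewrite /bump /= add1n subSS subSn // [i.+1%:R * _]mulrA mul_gbinomS.
rewrite [_.+1%:R * (_ * _)]mulrCA mul_gbinomS natrB //.
ring.
Qed.

Lemma gbinomD1S x k : gbinom (x + 1) k.+1 = gbinom x k.+1 + gbinom x k.
Proof.
elim: k => [|k IH]; first by rewrite !gbinomS !gbinom0 !mul1r !subr0 !divr1 addrC.
have k1 : k%:R + 1 != 0 :> K by rewrite natr1 pnatr_eq0.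
have k2 : k%:R + 1 + 1 != 0 :> K by rewrite !natr1 pnatr_eq0.
rewrite [gbinom (x + 1) k.+2]gbinomS IH [gbinom x k.+2]gbinomS gbinomS -!natr1.
by field; rewrite k1 k2.
Qed.

Lemma take_polyM M p q :
  take_poly M (p * q) = take_poly M (take_poly M p * take_poly M q).
Proof.
apply/polyP => k; rewrite !coef_take_poly; case: ifP => // kM.
rewrite !coefM; apply: eq_bigr => i _.
by rewrite !coef_take_poly (leq_ltn_trans (leq_ord i) kM) (leq_ltn_trans (leq_subr i k) kM).
Qed.

Definition binom_series x c M : {poly K} := \poly_(i < M) (gbinom x i * c ^+ i).

Lemma binom_seriesD x y c M :
  take_poly M (binom_series x c M * binom_series y c M) = binom_series (x + y) c M.
Proof.
apply/polyP => k; rewrite coef_take_poly coef_poly; case: ifP => // kM.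
rewrite coefM gbinomD big_distrl; apply: eq_bigr => i _ /=.
have iM : (i < M)%N by exact: leq_ltn_trans (leq_ord i) kM.
have kiM : (k - i < M)%N by exact: leq_ltn_trans (leq_subr i k) kM.
have -> : c ^+ k = c ^+ i * c ^+ (k - i) by rewrite -exprD subnKC // -ltnS.
rewrite !coef_poly iM kiM; ring.
Qed.

Lemma norm_coef_binom_series x c M i :
  `|(binom_series x c M)`_i| <= `|gbinom x i| * `|c| ^+ i.
Proof.
by rewrite coef_poly; case: ifP => _; rewrite ?normrM ?normrX // normr0 mulr_ge0 ?exprn_ge0.
Qed.

Lemma binom_series_nat n c M :
  binom_series n%:R c M = take_poly M ((1 + c *: 'X) ^+ n).
Proof.
elim: n => [|n IH].
  apply/polyP => -[|k]; rewrite coef_poly coef_take_poly coef1 gbinom_nat /=.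
  - by rewrite bin0 expr0 mulr1.
  - by rewrite bin0n mul0r if_same.
have bs1 : binom_series 1 c M = take_poly M (1 + c *: 'X).
  apply/polyP => -[|[|k]];
    rewrite coef_poly coef_take_poly coefD coef1 coefZ coefX (gbinom_nat 1) /=.
  - by rewrite expr0 mulr1 mulr0 addr0.
  - by rewrite expr1 mulr1 mul1r add0r.
  - by rewrite mul0r mulr0 addr0 if_same.
by rewrite mulrSr -binom_seriesD IH bs1 -take_polyM exprSr.
Qed.

Lemma binom_seriesD_nat x n c M :
  binom_series (x + n%:R) c M = take_poly M (binom_series x c M * (1 + c *: 'X) ^+ n).
Proof.
rewrite -binom_seriesD binom_series_nat take_polyM [RHS]take_polyM.
by rewrite [take_poly M (take_poly M _)]take_poly_id // size_take_poly.
Qed.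
End GeneralizedBinomial.
Arguments gbinom {K} x k : simpl never.

Section L1Norm.
Variable K : numFieldType.
Implicit Types (p q : {poly K}) (c : K).

Definition l1norm p : K := \sum_(i < size p) `|p`_i|.

Lemma l1normE p m : (size p <= m)%N -> l1norm p = \sum_(i < m) `|p`_i|.
Proof.
move=> hm; rewrite /l1norm (big_ord_widen m (fun i => `|p`_i|)) // big_mkcond /=.
apply: eq_bigr => i _; case: ifP => // /negbT; rewrite -leqNgt => h.
by rewrite nth_default // normr0.
Qed.

Lemma l1norm_ge0 p : 0 <= l1norm p.
Proof. by apply: sumr_ge0 => i _. Qed.

Lemma ler_sum_l1norm p m : \sum_(i < m) `|p`_i| <= l1norm p.
Proof.
rewrite (l1normE (leq_maxr m (size p))).
rewrite (big_ord_widen (maxn m (size p)) (fun i => `|p`_i|)) ?leq_maxl //.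
by rewrite [leRHS](bigID (fun i : 'I_ _ => (i < m)%N)) /= lerDl sumr_ge0.
Qed.

Lemma l1norm0 : l1norm 0 = 0.
Proof. by rewrite /l1norm size_poly0 big_ord0. Qed.

Lemma l1norm1 : l1norm 1 = 1.
Proof. by rewrite /l1norm size_poly1 big_ord1 coef1 normr1. Qed.

Lemma ler_l1normD p q : l1norm (p + q) <= l1norm p + l1norm q.
Proof.
rewrite (l1normE (size_polyD p q)) (l1normE (leq_maxl (size p) (size q))).
rewrite (l1normE (leq_maxr (size p) (size q))) -big_split /=.
by apply: ler_sum => i _; rewrite coefD ler_normD.
Qed.

Lemma l1normZ c q : l1norm (c *: q) = `|c| * l1norm q.
Proof.
rewrite (l1normE (size_scale_leq c q)) /l1norm big_distrr /=.
by apply: eq_bigr => i _; rewrite coefZ normrM.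
Qed.

Lemma l1norm_MXaddC q c : l1norm (q * 'X + c%:P) = l1norm q + `|c|.
Proof.
have hs : (size (q * 'X + c%:P)%R <= (size q).+1)%N.
  rewrite (leq_trans (size_polyD _ _)) // geq_max (leq_trans (size_polyC_leq1 c)) // andbT.
  by rewrite (leq_trans (size_polyMleq _ _)) // size_polyX addn2.
rewrite (l1normE hs) big_ord_recl /= coefD coefMX coefC /= add0r addrC.
by congr (_ + _); apply: eq_bigr => i _; rewrite coefD coefMX coefC addr0.
Qed.

Lemma ler_l1normM p q : l1norm (p * q) <= l1norm p * l1norm q.
Proof.
elim/poly_ind: p => [|p c IH]; first by rewrite mul0r l1norm0 mul0r.
rewrite l1norm_MXaddC mulrDl mulrAC mul_polyC (le_trans (ler_l1normD _ _)) //.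
have := l1norm_MXaddC (p * q) 0; rewrite polyC0 addr0 normr0 addr0 => ->.
by rewrite l1normZ mulrDl lerD // mulrC.
Qed.

Lemma ler_l1normX p n : l1norm (p ^+ n) <= l1norm p ^+ n.
Proof.
elim: n => [|n IH]; first by rewrite !expr0 l1norm1.
by rewrite !exprS (le_trans (ler_l1normM _ _)) // ler_pM // l1norm_ge0.
Qed.

Lemma ler_norm_coefM_l1norm p q k b : (forall j, (j <= k)%N -> `|q`_j| <= b) ->
  `|(p * q)`_k| <= l1norm p * b.
Proof.
move=> qb; have b0 : 0 <= b by exact: le_trans (normr_ge0 _) (qb 0%N isT).
rewrite coefM (le_trans (ler_norm_sum _ _ _)) //.
apply: le_trans (_ : \sum_(i < k.+1) `|p`_i| * b <= _); last first.
  by rewrite -big_distrl ler_wpM2r // ler_sum_l1norm.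
by apply: ler_sum => i _; rewrite normrM ler_wpM2l // qb // leq_subr.
Qed.
End L1Norm.

Section GbinomBounds.
Variable F : realFieldType.
Variable a : F.
Hypotheses (a_gt0 : 0 < a) (a_lt1 : a < 1).

(* [lra] ignores section hypotheses, hence the [have := a_gt0] lines. *)

Lemma norm_gbinomS (x : F) m : `|gbinom x m.+1| = `|gbinom x m| * `|x - m%:R| / m.+1%:R.
Proof. by rewrite gbinomS normrM normrM normfV normr_nat. Qed.

Lemma norm_gbinom1B_le1 m : `|gbinom (1 - a) m| <= 1.
Proof.
elim: m => [|m IH]; first by rewrite gbinom0 normr1.
have m_ge0 : (0 : F) <= m%:R by rewrite ler0n.
have m1_gt0 : (0 : F) < m.+1%:R by rewrite ltr0n.
have hm : `|1 - a - m%:R| <= m.+1%:R.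
  have := a_gt0; have := a_lt1.
  by rewrite ler_norml mulrSr => ? ?; apply/andP; split; lra.
rewrite norm_gbinomS ler_pdivrMr // mul1r -[leRHS]mul1r.
by rewrite ler_pM.
Qed.

Lemma norm_gbinomB1S i :
  `|gbinom (a - 1) i.+1| = `|gbinom (a - 1) i| * (i.+1%:R - a) / i.+1%:R.
Proof.
have i_ge0 : (0 : F) <= i%:R by rewrite ler0n.
have hneg : a - 1 - i%:R <= 0 by have := a_lt1; lra.
by rewrite norm_gbinomS (ler0_norm hneg) mulrSr; congr (_ * _ / _); ring.
Qed.

(* Pascal's rule for [a = (a - 1) + 1], and the alternating signs of the
   coefficients of [(1 + X)^(a - 1)], make the absolute values telescope. *)
Lemma norm_gbinomS_telescope i :
  `|gbinom a i.+1| = `|gbinom (a - 1) i| - `|gbinom (a - 1) i.+1|.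
Proof.
have i_ge0 : (0 : F) <= i%:R by rewrite ler0n.
have i1_gt0 : (0 : F) < i.+1%:R by rewrite ltr0n.
have -> : gbinom a i.+1 = gbinom (a - 1) i * (a / i.+1%:R).
  rewrite -{1}(subrK 1 a) gbinomD1S gbinomS.
  by field; rewrite -mulrS pnatr_eq0.
rewrite norm_gbinomB1S normrM (gtr0_norm (divr_gt0 a_gt0 i1_gt0)).
by field; rewrite -mulrS pnatr_eq0.
Qed.

Lemma sum_norm_gbinom i :
  \sum_(j < i.+1) `|gbinom a j| = 2 - `|gbinom (a - 1) i|.
Proof.
elim: i => [|i IH]; first by rewrite big_ord1 !gbinom0 normr1 -[2]/(1 + 1) addrK.
by rewrite big_ord_recr /= IH norm_gbinomS_telescope; ring.
Qed.

Lemma sum_norm_gbinom_le2 i : \sum_(j < i) `|gbinom a j| <= 2.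
Proof.
case: i => [|i]; first by rewrite big_ord0 ler0n.
by rewrite sum_norm_gbinom gerBl.
Qed.

Lemma sum_norm_gbinomD1_le4 i : \sum_(j < i.+1) `|gbinom (a + 1) j| <= 4.
Proof.
rewrite big_ord_recl gbinom0 normr1.
apply: le_trans (_ : 1 + \sum_(j < i) (`|gbinom a j.+1| + `|gbinom a j|) <= 4).
  by rewrite lerD2l; apply: ler_sum => j _; rewrite gbinomD1S ler_normD.
rewrite big_split /= addrA.
have -> : 1 + \sum_(j < i) `|gbinom a j.+1| = \sum_(j < i.+1) `|gbinom a j|.
  by rewrite big_ord_recl gbinom0 normr1.
by have := sum_norm_gbinom_le2 i.+1; have := sum_norm_gbinom_le2 i; lra.
Qed.
End GbinomBounds.

Section Pochhammer.
Variable K : numFieldType.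
Implicit Types (a x y : K).

Definition rising y s : K := \prod_(j < s) (y + j%:R).

Lemma rising0 y : rising y 0 = 1. Proof. exact: big_ord0. Qed.
Lemma risingS y s : rising y s.+1 = rising y s * (y + s%:R).
Proof. exact: big_ord_recr. Qed.

Lemma rising_gt0 y s : 0 < y -> 0 < rising y s.
Proof. by move=> y_gt0; apply: prodr_gt0 => j _; rewrite ltr_wpDr ?ler0n. Qed.

Lemma rising_add y s t : rising y (s + t) = rising y s * rising (y + s%:R) t.
Proof.
by rewrite /rising big_split_ord; congr (_ * _); apply: eq_bigr => j _; rewrite natrD addrA.
Qed.

Lemma fact_gbinom x s : s`!%:R * gbinom x s = \prod_(j < s) (x - j%:R).
Proof.
elim: s => [|s IH]; first by rewrite gbinom0 big_ord0 mulr1.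
rewrite big_ord_recr /= -IH gbinomS factS natrM.
by field; rewrite -mulrS pnatr_eq0.
Qed.

Lemma rising_opp y s : rising (- y) s = (-1) ^+ s * (s`!%:R * gbinom y s).
Proof.
elim: s => [|s IH]; first by rewrite rising0 gbinom0 !mulr1.
rewrite risingS IH gbinomS factS natrM exprS.
by field; rewrite -mulrS pnatr_eq0.
Qed.

Lemma fact_gbinom_rising y t : t`!%:R * gbinom (y + t%:R) t = rising (y + 1) t.
Proof.
rewrite fact_gbinom (reindex_inj rev_ord_inj) /=; apply: eq_bigr => j _.
by rewrite natrB ?ltn_ord //; ring.
Qed.

Lemma hypergeometric_coef a r s : rising (1 - a) r != 0 -> (s <= r)%N ->
  rising (- r%:R) s * rising (- r%:R - a) s / (rising (1 - a) s * s`!%:R)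
  = r`!%:R / rising (1 - a) r * gbinom (r%:R + a) s * gbinom (r%:R - a) (r - s).
Proof.
move=> nz_rising le_sr.
have fact_neq0 k : (k`!%:R : K) != 0 by rewrite pnatr_eq0 -lt0n fact_gt0.
set P := rising (1 - a) s; set Q := rising (1 - a + s%:R) (r - s).
have split_rising : rising (1 - a) r = P * Q by rewrite -rising_add subnKC.
move: nz_rising; rewrite split_rising mulf_eq0 negb_or => /andP[nzP nzQ].
have gbinom_Q : gbinom (r%:R - a) (r - s) = Q / (r - s)`!%:R.
  have -> : r%:R - a = (s%:R - a) + (r - s)%:R by rewrite natrB //; ring.
  apply: (@mulfI _ (r - s)`!%:R); first exact: fact_neq0.
  by rewrite fact_gbinom_rising mulrCA divff // mulr1 /Q; congr rising; ring.
have fact_r : r`!%:R = 'C(r, s)%:R * s`!%:R * (r - s)`!%:R :> K.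
  by rewrite -!natrM -mulnA bin_fact.
rewrite -opprD !rising_opp gbinom_nat gbinom_Q fact_r [r%:R + a]addrC.
have sign : (-1) ^+ s * (-1) ^+ s = 1 :> K by rewrite -exprMn mulrNN mulr1 expr1n.
by rewrite mulrACA sign mul1r; field; rewrite nzP nzQ !fact_neq0.
Qed.
End Pochhammer.

Section HypergeometricSum.
Variable K : numFieldType.

(* The sum is the coefficient of [X^(n+1)] in [(1 + w X)^(n+1+a) (1 + X)^(n+1-a)],
   whose factors split as [(1 + w X)^n (1 + w X)^(a+1)] and [(1 + X)^n (1 + X)^(1-a)]. *)
Lemma hypergeometric_sum_coef (a w : K) n :
  \sum_(s < n.+2) gbinom (n.+1%:R + a) s * w ^+ s * gbinom (n.+1%:R - a) (n.+1 - s)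
  = (((1 + w *: 'X) * (1 + 'X)) ^+ n
     * (binom_series (a + 1) w n.+2 * binom_series (1 - a) 1 n.+2))`_n.+1.
Proof.
set M := n.+2.
have -> : \sum_(s < n.+2) gbinom (n.+1%:R + a) s * w ^+ s * gbinom (n.+1%:R - a) (n.+1 - s)
    = (binom_series (n.+1%:R + a) w M * binom_series (n.+1%:R - a) 1 M)`_n.+1.
  rewrite coefM; apply: eq_bigr => i _.
  by rewrite !coef_poly ltnS leq_ord ltnS leq_subr expr1n mulr1.
have eqr : n.+1%:R + a = (a + 1) + n%:R by rewrite mulrSr; ring.
have eqs : n.+1%:R - a = (1 - a) + n%:R by rewrite mulrSr; ring.
suff e : take_poly M (binom_series (n.+1%:R + a) w M
    * binom_series (n.+1%:R - a) 1 M) = take_poly M (((1 + w *: 'X) * (1 + 'X)) ^+ n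
     * (binom_series (a + 1) w M * binom_series (1 - a) 1 M)).
  by move: (congr1 (fun p : {poly K} => p`_n.+1) e); rewrite !coef_take_poly ltnSn.
rewrite eqr eqs (binom_seriesD_nat (a + 1)) (binom_seriesD_nat (1 - a)) -take_polyM scale1r.
by rewrite exprMn mulrACA mulrC.
Qed.

Lemma l1norm_binomial_pair (w : K) :
  l1norm ((1 + w *: 'X) * (1 + 'X)) = 1 + `|1 + w| + `|w|.
Proof.
have -> : (1 + w *: 'X) * (1 + 'X) = ((0 * 'X + w%:P) * 'X + (1 + w)%:P) * 'X + 1%:P.
  by rewrite -!mul_polyC polyCD !polyC1; ring.
by rewrite !l1norm_MXaddC l1norm0 normr1 add0r addrC [`|w| + _]addrC addrA.
Qed.
End HypergeometricSum.

Lemma fmorph_gbinom (F K : numFieldType) (f : {rmorphism F -> K}) x k :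
  f (gbinom x k) = gbinom (f x) k.
Proof.
elim: k => [|k IH]; first by rewrite !gbinom0 rmorph1.
by rewrite !gbinomS -IH !rmorphM fmorphV rmorphB !rmorph_nat.
Qed.

Lemma rmorph_rising (F K : numFieldType) (f : {rmorphism F -> K}) y s :
  f (rising y s) = rising (f y) s.
Proof. by rewrite rmorph_prod; apply: eq_bigr => j _; rewrite rmorphD rmorph_nat. Qed.

Section ComplexBound.
Variable R : rcfType.
Local Open Scope complex_scope.

Lemma normc_real (x : R) : `|x%:C| = `|x|%:C.
Proof. by rewrite normc_def /= expr0n addr0 sqrtr_sqr. Qed.

Lemma norm_gbinom_real (x : R) k : `|gbinom x%:C k| = `|gbinom x k|%:C.
Proof. by rewrite -fmorph_gbinom normc_real. Qed.

Lemma norm_coefM_binom_series_le4 (a : R) (w : R[i]) M k :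
  0 < a -> a < 1 -> `|w| = 1 ->
  `|(binom_series (a + 1)%:C w M * binom_series (1 - a)%:C 1 M)`_k| <= 4.
Proof.
move=> a_gt0 a_lt1 w1; rewrite coefM (le_trans (ler_norm_sum _ _ _)) //.
apply: le_trans (_ : \sum_(j < k.+1) `|gbinom (a + 1)%:C j| <= 4).
  apply: ler_sum => j _; rewrite normrM.
  apply: le_trans (ler_pM _ _ (norm_coef_binom_series _ _ _ _)
                             (norm_coef_binom_series _ _ _ _)) _; rewrite ?normr_ge0 //.
  rewrite w1 normr1 !expr1n !mulr1 -[leRHS]mulr1 ler_wpM2l //.
  by rewrite norm_gbinom_real -(rmorph1 (real_complex R)) lecR norm_gbinom1B_le1.
under eq_bigr => j _ do rewrite norm_gbinom_real.
by rewrite -rmorph_sum -[4](rmorph_nat (real_complex R)) lecR sum_norm_gbinomD1_le4.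
Qed.

Lemma norm_hypergeometric_sum_le (a : R) (w : R[i]) n :
  0 < a -> a < 1 -> `|w| = 1 ->
  `|\sum_(s < n.+2) gbinom (n.+1%:R + a%:C) s * w ^+ s * gbinom (n.+1%:R - a%:C) (n.+1 - s)|
  <= 4 * (2 + `|1 + w|) ^+ n.
Proof.
move=> a_gt0 a_lt1 w1; rewrite hypergeometric_sum_coef.
have -> : a%:C + 1 = (a + 1)%:C by rewrite rmorphD rmorph1.
have -> : 1 - a%:C = (1 - a)%:C by rewrite rmorphB rmorph1.
apply: le_trans (ler_norm_coefM_l1norm _ (b := 4) _) _.
  by move=> j _; exact: norm_coefM_binom_series_le4.
rewrite mulrC ler_wpM2l // (le_trans (ler_l1normX _ _)) // l1norm_binomial_pair w1.
by rewrite addrAC.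
Qed.
End ComplexBound.

Section CoquelicotBridge.
Local Open Scope complex_scope.

(* Coquelicot's [C] carries no MathComp structure: computations are transported
   to [R[i]]. *)
Definition to_Ri (z : C) : R[i] := z.1 +i* z.2.

Lemma to_Ri_add x y : to_Ri (Cplus x y) = to_Ri x + to_Ri y.
Proof. by case: x; case: y. Qed.
Lemma to_Ri_plus x y : to_Ri (plus x y) = to_Ri x + to_Ri y.
Proof. by case: x; case: y. Qed.
Lemma to_Ri_mul x y : to_Ri (Cmult x y) = to_Ri x * to_Ri y.
Proof. by case: x; case: y. Qed.
Lemma to_Ri_opp x : to_Ri (Copp x) = - to_Ri x.
Proof. by case: x. Qed.
Lemma to_Ri_minus x y : to_Ri (Cminus x y) = to_Ri x - to_Ri y.
Proof. by rewrite /Cminus to_Ri_add to_Ri_opp. Qed.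
Lemma to_Ri_RtoC x : to_Ri (RtoC x) = x%:C.
Proof. by []. Qed.

Lemma to_Ri_inv x : to_Ri (Cinv x) = (to_Ri x)^-1.
Proof.
case: x => a b; rewrite /to_Ri /Cinv /=.
change ((a +i* b)^-1) with ((a / (a ^+ 2 + b ^+ 2)) -i* (b / (a ^+ 2 + b ^+ 2))).
by rewrite !RdivE RoppE mulNr !RmultE RplusE R1E !mulr1 !expr2.
Qed.

Lemma to_Ri_div x y : to_Ri (Cdiv x y) = to_Ri x / to_Ri y.
Proof. by rewrite /Cdiv to_Ri_mul to_Ri_inv. Qed.

Lemma to_Ri_pow x k : to_Ri (Cpow x k) = to_Ri x ^+ k.
Proof. by elim: k => [|k IH] //; rewrite /= to_Ri_mul IH exprS. Qed.

Lemma to_Ri_sum f r : to_Ri (sum_n f r) = \sum_(s < r.+1) to_Ri (f s).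
Proof.
elim: r => [|r IH]; first by rewrite sum_O big_ord1.
by rewrite sum_Sn to_Ri_plus IH [RHS]big_ord_recr.
Qed.

Lemma to_Ri_poch y s : to_Ri (poch y s) = rising (to_Ri y) s.
Proof.
elim: s => [|s IH]; first by rewrite rising0.
by rewrite /= risingS to_Ri_mul to_Ri_add IH to_Ri_RtoC INRE rmorph_nat.
Qed.

Lemma normc_to_Ri z : `|to_Ri z| = (Cmod z)%:C.
Proof. by case: z => a b; rewrite normc_def /Cmod RsqrtE !RpowE RplusE. Qed.

Lemma fact_factorial s : Factorial.fact s = s`!.
Proof. by elim: s => // s IH; rewrite /= IH factS. Qed.

Lemma rpoch_rising y s : rpoch y s = rising y s.
Proof.
by elim: s => [|s IH]; rewrite ?rising0 // /= risingS IH RmultE RplusE INRE.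
Qed.

Lemma to_Ri_Xnr n r X :
  to_Ri (Xnr n r X) = \sum_(s < r.+1)
    (rising (- r%:R) s * rising (- r%:R - (1 / n%:R)%:C) s
      / (rising (1 - (1 / n%:R)%:C) s * s`!%:R)) * to_Ri X ^+ s.
Proof.
rewrite /Xnr to_Ri_sum; apply: eq_bigr => s _.
rewrite to_Ri_mul to_Ri_div !to_Ri_mul !to_Ri_poch to_Ri_minus to_Ri_opp to_Ri_minus.
by rewrite !to_Ri_RtoC to_Ri_pow RdivE R1E !INRE fact_factorial !rmorph_nat rmorph1.
Qed.

Lemma norm_to_Ri_Xnr_le n r X : (1 < n)%N -> `|to_Ri X| = 1 ->
  `|to_Ri (Xnr n r.+1 X)| <= (gamma_ratio n r.+1)%:C * (4 * (2 + `|1 + to_Ri X|) ^+ r).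
Proof.
(* An opaque name for [1/n]: a [set] local definition gets unfolded by rewriting. *)
move=> n_gt1 X1; have [a a_def] : {a : R | a = 1 / n%:R} by exists (1 / n%:R).
have n_gt0 : (0 : R) < n%:R by rewrite ltr0n (ltn_trans _ n_gt1).
have a_gt0 : 0 < a by rewrite a_def divr_gt0.
have a_lt1 : a < 1 by rewrite a_def ltr_pdivrMr // mul1r ltr1n.
have real_1Ba : 1 - a%:C = (1 - a)%:C by rewrite rmorphB rmorph1.
have rising_1Ba_gt0 : 0 < rising (1 - a) r.+1 by rewrite rising_gt0 // subr_gt0.
have gamma_E : gamma_ratio n r.+1 = r.+1`!%:R / rising (1 - a) r.+1.
  by rewrite /gamma_ratio RdivE rpoch_rising INRE fact_factorial RminusE RdivE R1E INRE -a_def.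
have gamma_gt0 : 0 < gamma_ratio n r.+1 by rewrite gamma_E divr_gt0 // ltr0n fact_gt0.
have -> : to_Ri (Xnr n r.+1 X) = (gamma_ratio n r.+1)%:C * \sum_(s < r.+2)
    gbinom (r.+1%:R + a%:C) s * to_Ri X ^+ s * gbinom (r.+1%:R - a%:C) (r.+1 - s).
  rewrite to_Ri_Xnr mulr_sumr; apply: eq_bigr => s _.
  have -> : (1 / n%:R)%:C = a%:C by rewrite a_def.
  rewrite hypergeometric_coef; last 2 first.
  - by rewrite real_1Ba -(rmorph_rising (real_complex R)) gt_eqF // ltcR.
  - by rewrite -ltnS.
  rewrite gamma_E fmorph_div rmorph_nat (rmorph_rising (real_complex R)) real_1Ba -!mulrA.
  by rewrite [to_Ri X ^+ s * _]mulrC.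
have gamma_ge0 : 0 <= (gamma_ratio n r.+1)%:C by rewrite ler0c ltW.
by rewrite normrM (ger0_norm gamma_ge0) ler_wpM2l // norm_hypergeometric_sum_le.
Qed.

Lemma Cmod_Xnr_le_gamma n r X : (1 < n)%N -> Cmod X = 1 ->
  Cmod (Xnr n r.+1 X) <= gamma_ratio n r.+1 * (4 * (2 + Cmod (Cplus (RtoC 1) X)) ^+ r).
Proof.
move=> n_gt1 X1.
have X1' : `|to_Ri X| = 1 by rewrite normc_to_Ri X1.
have := norm_to_Ri_Xnr_le r n_gt1 X1'.
rewrite -[1 + to_Ri X]/(to_Ri (Cplus (RtoC 1) X)) !normc_to_Ri.
(* Generalizing keeps [rmorphM] from unfolding [gamma_ratio]. *)
move: (gamma_ratio _ _) (Cmod _) (Cmod _) => g c d.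
by rewrite -lecR !rmorphM rmorphXn !rmorph_nat rmorphD rmorph_nat.
Qed.

Section StdlibStatement.
Local Open Scope R_scope.

Lemma Cmod_Xnr_le (n r : nat) (X : C) : (2 <= n)%coq_nat -> Cmod X = 1 ->
  Cmod (Xnr n r.+1 X) <= 4 * gamma_ratio n r.+1 * (2 + Cmod (Cplus 1 X)) ^ r.
Proof.
move=> /ssrnat.leP n_gt1 X1.
have e4 : IZR 4 = 4%:R by rewrite IZRposE INRE.
have e2 : IZR 2 = 2%:R by rewrite IZRposE INRE.
apply/RleP; rewrite e4 e2 !RmultE RpowE RplusE [(_ * gamma_ratio _ _)%R]mulrC -mulrA.
exact: Cmod_Xnr_le_gamma.
Qed.
End StdlibStatement.
End CoquelicotBridge.
End HypergeometricBound.

Lemma Cmod_Xstar_le (n r : nat) (X Y : C) : (2 <= n)%nat -> Cmod (X / Y) = 1%R ->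
  (Cmod (Xstar n (S r) X Y)
     <= 4 * Cmod Y ^ S r * gamma_ratio n (S r) * (2 + Cmod (1 + X / Y)) ^ r)%R.
Proof.
  intros hn hXY.
  unfold Xstar. rewrite Cmod_mult, Cmod_pow.
  pose proof (HypergeometricBound.Cmod_Xnr_le r hn hXY) as hbound.
  pose proof (pow_le (Cmod Y) (S r) (Cmod_ge_0 Y)) as hY.
  replace (4 * Cmod Y ^ S r * gamma_ratio n (S r) * (2 + Cmod (1 + X / Y)) ^ r)%R
    with (Cmod Y ^ S r * (4 * gamma_ratio n (S r) * (2 + Cmod (1 + X / Y)) ^ r))%R
    by ring.
  apply Rmult_le_compat_l; assumption.
Qed.

Lemma Cmod_expi (phi : R) : Cmod (expi phi) = 1%R.
Proof.
  unfold Cmod, expi; simpl.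
  replace (cos phi * (cos phi * 1) + sin phi * (sin phi * 1))%R with 1%R by
    (pose proof (sin2_cos2 phi) as e; unfold Rsqr in e; lra).
  apply sqrt_1.
Qed.

Lemma Cmod_1_add_expi_sqr (phi : R) : (Cmod (1 + expi phi) ^ 2 = 2 + 2 * cos phi)%R.
Proof.
  unfold Cmod.
  rewrite pow2_sqrt by (apply Rplus_le_le_0_compat; apply pow2_ge_0).
  pose proof (sin2_cos2 phi) as e; unfold Rsqr in e.
  unfold expi; simpl; nra.
Qed.

Lemma Cmod_1_add_expi (phi : R) : (- PI <= phi <= PI)%R ->
  Cmod (1 + expi phi) = (2 * cos (phi / 2))%R.
Proof.
  intros hphi.
  assert (hc : (0 <= cos (phi / 2))%R) by (apply cos_ge_0; lra).
  assert (hcos : cos phi = (2 * cos (phi / 2) ^ 2 - 1)%R).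
  { replace phi with (2 * (phi / 2))%R at 1 by field. rewrite cos_2a_cos. ring. }
  rewrite <- (sqrt_pow2 (Cmod _)) by apply Cmod_ge_0.
  rewrite Cmod_1_add_expi_sqr, hcos, <- (sqrt_pow2 (2 * cos (phi / 2))) by lra.
  f_equal. ring.
Qed.

Lemma two_add_Cmod_1_add_expi (phi : R) : (- PI <= phi <= PI)%R ->
  (2 + Cmod (1 + expi phi) = Cmod (1 + expi (phi / 2)) ^ 2)%R.
Proof.
  intros hphi.
  rewrite Cmod_1_add_expi, Cmod_1_add_expi_sqr by assumption.
  ring.
Qed.

Lemma Cmod_1_add_inv (w : C) : Cmod w = 1%R -> Cmod (1 + / w) = Cmod (1 + w).
Proof.
  intros hw.
  assert (w0 : w <> 0) by (intros e; rewrite e, Cmod_0 in hw; lra).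
  replace (1 + / w)%C with ((1 + w) / w)%C by (field; assumption).
  rewrite Cmod_div, hw by assumption.
  apply Rdiv_1_r.
Qed.

Theorem lemma2p6 (n r : nat) (u z : C) (phi : R) :
  (2 <= n)%nat -> (1 <= r)%nat -> u <> 0%C ->
  (0 < phi < PI)%R -> (z / u)%C = expi phi ->
  (Cmod (Xstar n r z u)
     <= 4 * Cmod u ^ r * gamma_ratio n r * Cmod (1 + expi (phi / 2))%C ^ (2 * r - 2))%R
  /\
  (Cmod (Xstar n r u z)
     <= 4 * Cmod z ^ r * gamma_ratio n r * Cmod (1 + expi (phi / 2))%C ^ (2 * r - 2))%R.
Proof.
  intros hn hr hu hphi hw.
  destruct r as [|r]; [lia|].
  assert (hw1 : Cmod (z / u) = 1%R) by (rewrite hw; apply Cmod_expi).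
  assert (hzu : (z / u)%C <> 0) by (intros e; rewrite e, Cmod_0 in hw1; lra).
  assert (hz : z <> 0) by (intros e; apply hzu; rewrite e; field; assumption).
  assert (huz : (u / z = / (z / u))%C) by (field; auto).
  replace (2 * S r - 2)%nat with (2 * r)%nat by lia.
  rewrite pow_mult, <- two_add_Cmod_1_add_expi, <- hw by lra.
  split.
  - apply Cmod_Xstar_le; assumption.
  - rewrite <- Cmod_1_add_inv, <- huz by assumption.
    apply Cmod_Xstar_le; [assumption|].
    rewrite huz, Cmod_inv, hw1 by exact hzu.
    apply Rinv_1.
Qed.
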